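(* Let $\hat S = \{{\cal S}_{1}, \ldots, {\cal S}_{k}\}$ ($k \ge 1$) be a finite set of services and let $q_1, \ldots, q_m$ be real-valued QoS parameters, each either positively monotonic (higher is better) or negatively monotonic (lower is better). For each parameter $q_t$ let $Max_t, Min_t$ be the maximum and minimum of $q_t({\cal S}_j)$ over $\hat S$, and define $NV_t({\cal S}_j) = 1$ if $Max_t = Min_t$, otherwise $NV_t({\cal S}_j) = \frac{q_t({\cal S}_j) - Min_t}{Max_t - Min_t}$ for positively monotonic $q_t$ and $NV_t({\cal S}_j) = \frac{Max_t - q_t({\cal S}_j)}{Max_t - Min_t}$ for negatively monotonic $q_t$; let $Dev_t({\cal S}_j) = 1 - NV_t({\cal S}_j)$. Choose the representative ${\cal S}_l$ as a service minimizing $\max_t Dev_t$; among tied services, choose one minimizing the second largest deviation, and so on (i.e. minimize lexicographically the vector of deviations sorted in non-increasing order), breaking any remaining ties arbitrarily. Then the QoS vector $(q_1({\cal S}_l), \ldots, q_m({\cal S}_l))$ lies on the Pareto-optimal front of $\{(q_1({\cal S}_j), \ldots, q_m({\cal S}_j)) : 1 \le j \le k\}$: there is no ${\cal S}_j \in \hat S$ that is at least as good as ${\cal S}_l$ in every parameter and strictly better in at least one parameter.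
   Context: In the first-level abstraction of web services, each class of services with identical input and output sets is replaced by one abstract service, which is assigned the QoS values of the ''best representative'' service of the class selected as described in the claim. ''At least as good'' means $\ge$ for positively monotonic parameters and $\le$ for negatively monotonic parameters. *)

(* Services are indexed by 'I_k, QoS parameters by 'I_m.
   q j t = value of parameter t on service j; pos t = true iff q_t is
   positively monotonic (higher is better), false iff negatively monotonic. *)
From mathcomp Require Import all_boot all_order all_algebra.
Set Implicit Arguments. Unset Strict Implicit. Unset Printing Implicit Defensive.
Import Order.TTheory GRing.Theory Num.Theory.
Local Open Scope ring_scope.

Section QoS.
Variables (R : realFieldType) (k m : nat).
Variable q : 'I_k -> 'I_m -> R.
Variable pos : 'I_m -> bool.

(* Max_t and Min_t over the (nonempty) set of services; the seed of the
   iterated max/min is a value of q itself, so this is the true max/min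
   whenever k >= 1. *)
Definition Maxq (t : 'I_m) : R :=
  \big[Num.max/ head 0 [seq q j t | j <- enum 'I_k]]_(j < k) q j t.
Definition Minq (t : 'I_m) : R :=
  \big[Num.min/ head 0 [seq q j t | j <- enum 'I_k]]_(j < k) q j t.

Definition NV (t : 'I_m) (j : 'I_k) : R :=
  if Maxq t == Minq t then 1
  else if pos t then (q j t - Minq t) / (Maxq t - Minq t)
  else (Maxq t - q j t) / (Maxq t - Minq t).

Definition Dev (t : 'I_m) (j : 'I_k) : R := 1 - NV t j.

Definition sorted_devs (j : 'I_k) : seq R :=
  sort (fun x y : R => y <= x) [seq Dev t j | t <- enum 'I_m].

Definition at_least_as_good (t : 'I_m) (j l : 'I_k) : bool :=
  if pos t then q l t <= q j t else q j t <= q l t.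
Definition strictly_better (t : 'I_m) (j l : 'I_k) : bool :=
  if pos t then q l t < q j t else q j t < q l t.
End QoS.

Fixpoint lex_le (R : realFieldType) (s1 s2 : seq R) : bool :=
  match s1, s2 with
  | x :: s1', y :: s2' => (x < y) || ((x == y) && lex_le s1' s2')
  | _, _ => true
  end.

(* If service j dominated the representative l, every deviation of j would be
   at most the corresponding deviation of l, and one of them strictly smaller.
   Sorting in non-increasing order is monotone for the pointwise order, so the
   sorted deviation vector of j is pointwise below that of l; lexicographic
   minimality of l then forces the two sorted vectors to coincide.  They are
   permutations of the deviation vectors, so the deviations of j and of l have
   equal sums, contradicting the strict inequality between these sums. *)

From mathcomp Require Import all_boot all_order all_algebra.
Set Implicit Arguments. Unset Strict Implicit. Unset Printing Implicit Defensive.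
Import Order.TTheory GRing.Theory Num.Theory.
Local Open Scope ring_scope.

Section SortNonincreasing.
Open Scope order_scope.
Context {disp : Order.disp_t} {T : orderType disp} (x0 : T).

Local Notation ge := (fun x y : T => y <= x).

Lemma count_ge_nth_sorted (s : seq T) i : sorted ge s -> (i < size s)%N ->
  (i < count (>= nth x0 s i) s)%N.
Proof.
move=> s_sorted lt_is; set x := nth x0 s i.
rewrite -(cat_take_drop i.+1 s) count_cat; have size_take_s := size_takel lt_is.
suff -> : count (>= x) (take i.+1 s) = i.+1 by rewrite ltnS leq_addr.
apply/eqP; rewrite -{2}size_take_s -all_count; apply/(all_nthP x0) => p.
rewrite size_take_s ltnS => le_pi; rewrite nth_take //.
by apply: (sorted_leq_nth ge_trans (@lexx _ T) x0 s_sorted); rewrite ?inE // (leq_ltn_trans le_pi).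
Qed.

Lemma count_ge_sorted_le (s : seq T) i v : sorted ge s -> (i < size s)%N ->
  nth x0 s i < v -> (count (>= v) s <= i)%N.
Proof.
move=> s_sorted lt_is lt_iv; rewrite -(cat_take_drop i s) count_cat.
suff -> : count (>= v) (drop i s) = 0%N.
  by rewrite addn0 (leq_trans (count_size _ _)) // size_takel // ltnW.
apply/eqP; rewrite -leqn0 leqNgt -has_count; apply/(has_nthP x0) => -[p].
rewrite size_drop nth_drop ltn_subRL => lt_ips; apply/negP; rewrite -ltNge.
apply: le_lt_trans lt_iv.
by apply: (sorted_leq_nth ge_trans (@lexx _ T) x0 s_sorted); rewrite ?inE ?leq_addr.
Qed.

(* Above any threshold, G has at least as many values as F. *)
Lemma nth_sort_ge_map_le (I : Type) (r : seq I) (F G : I -> T) :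
  (forall i, F i <= G i) ->
  forall n, nth x0 (sort ge (map F r)) n <= nth x0 (sort ge (map G r)) n.
Proof.
move=> le_FG n; have [lt_n_size | le_size_n] := ltnP n (size r); last first.
  by rewrite !nth_default ?size_sort ?size_map.
set v := nth x0 (sort ge (map F r)) n; rewrite leNgt; apply/negP => lt_GF.
have lt_n_countF : (n < count (>= v) (map F r))%N.
  have := count_ge_nth_sorted (i := n) (sort_sorted ge_total (map F r)).
  by rewrite size_sort size_map count_sort; apply.
have le_countG_n : (count (>= v) (map G r) <= n)%N.
  have := count_ge_sorted_le (i := n) (v := v) (sort_sorted ge_total (map G r)).
  by rewrite size_sort size_map count_sort; apply.
have le_countFG : (count (>= v) (map F r) <= count (>= v) (map G r))%N.
  by rewrite !count_map; apply: sub_count => i /= le_vF; apply: le_trans le_vF (le_FG i).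
by have := leq_ltn_trans (leq_trans le_countFG le_countG_n) lt_n_countF; rewrite ltnn.
Qed.

End SortNonincreasing.

Lemma lex_le_ge_eq (R : realFieldType) (s u : seq R) : size s = size u ->
  (forall i, nth 0 u i <= nth 0 s i) -> lex_le s u -> s = u.
Proof.
elim: s u => [|x s IH] [|y u] //= [size_su] le_us /orP [lt_xy | /andP [/eqP -> lex_su]].
  by have := le_us 0%N; rewrite /= leNgt lt_xy.
by rewrite (IH u size_su (fun i => le_us i.+1) lex_su).
Qed.

Lemma ltr_sum_le_lt (R : numDomainType) (I : finType) (F G : I -> R) i0 :
  (forall i, F i <= G i) -> F i0 < G i0 -> \sum_i F i < \sum_i G i.
Proof.
move=> le_FG lt_FG0; rewrite (bigD1 i0) // [X in _ < X](bigD1 i0) //=.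
by apply: ltr_leD lt_FG0 _; apply: ler_sum.
Qed.

Section Deviations.
Variables (R : realFieldType) (k m : nat) (q : 'I_k -> 'I_m -> R) (pos : 'I_m -> bool).

Lemma q_le_Maxq t j : q j t <= Maxq q t.
Proof. exact: le_bigmax. Qed.

Lemma Minq_le_q t j : Minq q t <= q j t.
Proof. exact: bigmin_le. Qed.

Lemma Minq_lt_Maxq t : Maxq q t != Minq q t -> Minq q t < Maxq q t.
Proof.
rewrite lt_neqAle eq_sym => -> /=.
exact: le_trans (bigmin_le_id _ _ _ _) (bigmax_ge_id _ _ _ _).
Qed.

Lemma Maxq_eq_Minq_q t j : Maxq q t = Minq q t -> q j t = Minq q t.
Proof. by move=> eq_Mm; apply: le_anti; rewrite Minq_le_q -eq_Mm q_le_Maxq. Qed.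

Lemma strictly_better_Maxq_neq t j l :
  strictly_better q pos t j l -> Maxq q t != Minq q t.
Proof.
rewrite /strictly_better; apply: contraTN => /eqP eq_Mm.
by rewrite !(Maxq_eq_Minq_q _ eq_Mm) ltxx if_same.
Qed.

Lemma Dev_le t j l : at_least_as_good q pos t j l -> Dev q pos t j <= Dev q pos t l.
Proof.
rewrite /at_least_as_good /Dev /NV; case: eqP => // /eqP neq_Mm.
have range_gt0 : 0 < (Maxq q t - Minq q t)^-1 by rewrite invr_gt0 subr_gt0 Minq_lt_Maxq.
by case: (pos t) => le_lj; rewrite lerD2l lerN2 ler_pM2r // ?lerD2r ?lerD2l ?lerN2.
Qed.

Lemma Dev_lt t j l : strictly_better q pos t j l -> Dev q pos t j < Dev q pos t l.
Proof.
move=> better; have neq_Mm := strictly_better_Maxq_neq better; move: better.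
rewrite /strictly_better /Dev /NV (negbTE neq_Mm).
have range_gt0 : 0 < (Maxq q t - Minq q t)^-1 by rewrite invr_gt0 subr_gt0 Minq_lt_Maxq.
by case: (pos t) => lt_lj; rewrite ltrD2l ltrN2 ltr_pM2r // ?ltrD2r ?ltrD2l ?ltrN2.
Qed.

Lemma size_sorted_devs j : size (sorted_devs q pos j) = m.
Proof. by rewrite size_sort size_map size_enum_ord. Qed.

Lemma sum_sorted_devs j : \sum_(x <- sorted_devs q pos j) x = \sum_t Dev q pos t j.
Proof. by rewrite (perm_big _ (permEl (perm_sort _ _))) big_map big_enum. Qed.

End Deviations.

Theorem lemma5 (R : realFieldType) (k m : nat) (hk : (0 < k)%N)
  (q : 'I_k -> 'I_m -> R) (pos : 'I_m -> bool) (l : 'I_k)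
  (hl : forall j : 'I_k, lex_le (sorted_devs q pos l) (sorted_devs q pos j)) :
  ~ exists j : 'I_k,
      (forall t : 'I_m, at_least_as_good q pos t j l) /\
      (exists t : 'I_m, strictly_better q pos t j l).
Proof.
move=> [j [as_good [t0 better_t0]]].
have le_Dev t : Dev q pos t j <= Dev q pos t l by apply: Dev_le.
have sorted_devs_eq : sorted_devs q pos l = sorted_devs q pos j.
  apply: lex_le_ge_eq (hl j); first by rewrite !size_sorted_devs.
  exact: nth_sort_ge_map_le.
have := ltr_sum_le_lt le_Dev (Dev_lt better_t0).
by rewrite -!sum_sorted_devs sorted_devs_eq ltxx.
Qed.
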